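(* Let $n,d\ge 2$, $\mathcal T=\sum_{k=1}^{n+1}\mathbf v_k^{\otimes d}$, let $0\le s_k\le 1$ for $1\le k\le n-1$ and $s_n:=1-\sum_{k=1}^{n-1}s_k$. Then $\big(\sum_{k=1}^n s_k\mathbf v_k,\mu\big)$ is an eigenpair of $\mathcal T$ if and only if $$\mu s_k=\frac{1}{n^{d-1}}\Big(\big((n+1)s_k-1\big)^{d-1}-(-1)^{d-1}\Big),\qquad 1\le k\le n.$$
   Context: Simplex frame: for $n\ge 2$, $\mathbf v_k=\sqrt{1+\frac1n}\,\mathbf e_k-\frac{1}{n^{3/2}}(\sqrt{n+1}-1)\mathbf 1_n$ ($1\le k\le n$), $\mathbf v_{n+1}=-\frac{1}{\sqrt n}\mathbf 1_n$, where $\mathbf e_k$ are unit vectors of $\mathbb R^n$ and $\mathbf 1_n=(1,\ldots,1)^\top$; $\|\mathbf v_k\|=1$, $\langle\mathbf v_k,\mathbf v_j\rangle=-\frac1n$ ($k\ne j$), $\sum_k\mathbf v_k=\mathbf 0$. $\mathcal T=\sum_{k=1}^{n+1}\mathbf v_k^{\otimes d}$, $\mathcal T\cdot\mathbf v^{d-1}=\sum_{k}\langle\mathbf v,\mathbf v_k\rangle^{d-1}\mathbf v_k$; an eigenpair is $(\mathbf v,\mu)$ with $\mathbf v\neq\mathbf 0$ and $\mathcal T\cdot\mathbf v^{d-1}=\mu\mathbf v$. *)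

From HB Require Import structures.
From mathcomp Require Import all_boot all_order all_algebra.
Set Implicit Arguments. Unset Strict Implicit. Unset Printing Implicit Defensive.
Import Order.TTheory GRing.Theory Num.Theory.
Local Open Scope ring_scope.

(* Vectors of R^n are row vectors 'rV[R]_n; R is any real closed field
   (the reals are one). Paper index k = 1..n+1 corresponds to k-1 : 'I_n.+1. *)

Definition ones (R : rcfType) (n : nat) : 'rV[R]_n := const_mx 1.
Arguments ones : clear implicits.
Definition unitv (R : rcfType) (n : nat) (k : 'I_n) : 'rV[R]_n :=
  \row_(j < n) (if j == k then 1 else 0).
Arguments unitv : clear implicits.

(* Simplex frame: v_k for k < n (paper 1 <= k <= n), v_n (paper v_{n+1}). *)
Definition simplex_frame (R : rcfType) (n : nat) (k : 'I_n.+1) : 'rV[R]_n :=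
  match ltnP k n with
  | LtnNotGeq Hk =>
      Num.sqrt (1 + n%:R^-1) *: unitv R n (Ordinal Hk)
      - ((Num.sqrt (n.+1%:R) - 1) / (n%:R * Num.sqrt n%:R)) *: ones R n
  | GeqNotLtn _ => - (Num.sqrt n%:R)^-1 *: ones R n
  end.
Arguments simplex_frame : clear implicits.

Definition dotv (R : rcfType) (n : nat) (u w : 'rV[R]_n) : R :=
  \sum_(i < n) u 0 i * w 0 i.

(* T . v^{d-1} for T = sum_k v_k^{(x) d}:  sum_k <v, v_k>^{d-1} v_k *)
Definition Tapply (R : rcfType) (n d : nat) (v : 'rV[R]_n) : 'rV[R]_n :=
  \sum_(k < n.+1) (dotv v (simplex_frame R n k)) ^+ d.-1 *: simplex_frame R n k.

Definition eigenpair (R : rcfType) (n d : nat) (v : 'rV[R]_n) (mu : R) : Prop :=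
  v != 0 /\ Tapply d v = mu *: v.

From HB Require Import structures.
From mathcomp Require Import all_boot all_order all_algebra.
From mathcomp Require Import ring zify.
Import Order.TTheory GRing.Theory Num.Theory.
Local Open Scope ring_scope.

(* The coordinates of v_1, ..., v_n are [a [i == k] - b], so a combination
   [w = sum_k x_k v_k] has coordinates [a x_i - b sum x]; summing coordinates
   shows that v_1, ..., v_n are linearly independent, and <v_k, v_j> equals
   [((n+1) [k == j] - 1) / n].  Since v_{n+1} = - sum_k v_k, the vector
   T.w^{d-1} is the combination of v_1, ..., v_n with coefficients
   [<w, v_j>^{d-1} - <w, v_{n+1}>^{d-1}]; comparing coefficients with mu w
   gives the eigen-equations, and w <> 0 because sum s_k = 1. *)

Lemma sumr_mul_delta (R : comPzRingType) n (x : 'I_n -> R) (a b : R) (j : 'I_n) :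
  \sum_i x i * (a * (i == j)%:R - b) = a * x j - b * \sum_i x i.
Proof.
under eq_bigr => i _ do rewrite mulrBr.
rewrite sumrB -mulr_suml (bigD1 j) //= eqxx mulr1 big1 ?addr0.
  by rewrite mulrC (mulrC b).
by move=> i /negbTE ->; rewrite !mulr0.
Qed.

Section SimplexFrame.
Variables (R : rcfType) (n : nat).
Hypothesis n_gt0 : (0 < n)%N.

Local Notation v k := (simplex_frame R n (widen_ord (leqnSn n) k)).
Local Notation vlast := (simplex_frame R n ord_max).
Local Notation a := (Num.sqrt (1 + n%:R^-1) : R).
Local Notation b := ((Num.sqrt n.+1%:R - 1) / (n%:R * Num.sqrt n%:R) : R).
Local Notation c := ((Num.sqrt n%:R)^-1 : R).

Lemma frame_coord (k i : 'I_n) : v k 0 i = a * (i == k)%:R - b.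
Proof.
rewrite /simplex_frame; case: ltnP => /= [lt_kn | ]; last by rewrite leqNgt ltn_ord.
have -> : Ordinal lt_kn = k by apply: val_inj.
by rewrite !mxE mulr1; case: (i == k).
Qed.

Lemma frame_last_coord (i : 'I_n) : vlast 0 i = - c.
Proof.
rewrite /simplex_frame; case: ltnP => /= [lt_nn | _]; first by exfalso; rewrite ltnn in lt_nn.
by rewrite !mxE mulr1.
Qed.

Let natr_neq0 : (n%:R : R) != 0. Proof. by rewrite pnatr_eq0 -lt0n. Qed.
Let sqrt_neq0 : Num.sqrt (n%:R : R) != 0.
Proof. by rewrite gt_eqF // sqrtr_gt0 ltr0n. Qed.

Lemma frame_diag_sqr : a ^+ 2 = n.+1%:R / n%:R.
Proof.
rewrite sqr_sqrtr; last by rewrite addr_ge0 // invr_ge0 ler0n.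
by rewrite -addn1 natrD; field.
Qed.

Lemma frame_diag_sqrt : a = Num.sqrt n.+1%:R / Num.sqrt n%:R.
Proof.
rewrite (_ : 1 + n%:R^-1 = n.+1%:R * n%:R^-1); last by rewrite -addn1 natrD; field.
by rewrite sqrtrM ?ler0n // sqrtrV ?ler0n.
Qed.

Lemma frame_diag_neq0 : a != 0.
Proof. by rewrite frame_diag_sqrt mulf_neq0 ?invr_eq0 // gt_eqF // sqrtr_gt0 ltr0n. Qed.

Lemma frame_diag_sub_shift : a - n%:R * b = c.
Proof. by rewrite frame_diag_sqrt; field; rewrite sqrt_neq0 natr_neq0. Qed.

(* With r = sqrt (n+1), t = sqrt n: b (a + c) = (r - 1) (r + 1) / (n t^2). *)
Lemma frame_shift_mul : a * b + b * c = n%:R^-1.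
Proof.
rewrite frame_diag_sqrt.
have sqr_r := sqr_sqrtr (ler0n R n.+1); have sqr_t := sqr_sqrtr (ler0n R n).
have t_neq0 := sqrt_neq0.
set r := Num.sqrt n.+1%:R in sqr_r *; set t := Num.sqrt n%:R in sqr_t t_neq0 *.
have -> : r / t * ((r - 1) / (n%:R * t)) + (r - 1) / (n%:R * t) * t^-1
        = (r ^+ 2 - 1) / (n%:R * t ^+ 2) by field; rewrite t_neq0 natr_neq0.
by rewrite sqr_r sqr_t -addn1 natrD; field.
Qed.

Lemma frame_comb_coord (x : 'I_n -> R) (i : 'I_n) :
  (\sum_k x k *: v k) 0 i = a * x i - b * \sum_k x k.
Proof.
rewrite summxE; under eq_bigr => k _ do rewrite mxE frame_coord eq_sym.
exact: sumr_mul_delta.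
Qed.

Lemma sum_frame_comb_coord (x : 'I_n -> R) :
  \sum_i (a * x i - b * \sum_k x k) = c * \sum_k x k.
Proof.
rewrite sumrB -mulr_sumr sumr_const card_ord -[X in _ - X]mulr_natl -frame_diag_sub_shift.
ring.
Qed.

Lemma frame_last_sum : vlast = - \sum_k v k.
Proof.
apply/rowP => i; rewrite frame_last_coord mxE.
under [in RHS]eq_bigr => k _ do rewrite -[v k]scale1r.
rewrite frame_comb_coord sumr_const card_ord -mulr_natl mulr1.
by rewrite -frame_diag_sub_shift; ring.
Qed.

Lemma frame_comb_eq0 (x : 'I_n -> R) :
  \sum_k x k *: v k = 0 -> forall k, x k = 0.
Proof.
move=> w0.
have sum_x0 : \sum_k x k = 0.
  have /eqP := sum_frame_comb_coord x.
  rewrite big1 => [|i _]; last by rewrite -frame_comb_coord w0 mxE.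
  by rewrite eq_sym mulf_eq0 invr_eq0 (negbTE sqrt_neq0) => /eqP.
move=> k; have /eqP := frame_comb_coord x k.
rewrite w0 mxE sum_x0 mulr0 subr0 eq_sym mulf_eq0 (negbTE frame_diag_neq0).
by move/eqP.
Qed.

Lemma frame_comb_inj (x y : 'I_n -> R) :
  \sum_k x k *: v k = \sum_k y k *: v k <-> forall k, x k = y k.
Proof.
split=> [exy k | exy]; last by apply: eq_bigr => k _; rewrite exy.
apply/eqP; rewrite -subr_eq0; apply/eqP; move: k; apply: frame_comb_eq0.
by rewrite (eq_bigr _ (fun k _ => scalerBl _ _ _)) sumrB exy subrr.
Qed.

Lemma dot_comb_frame (x : 'I_n -> R) (j : 'I_n) :
  dotv (\sum_k x k *: v k) (v j) = (n.+1%:R * x j - \sum_k x k) / n%:R.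
Proof.
rewrite /dotv; under eq_bigr => i _ do rewrite frame_comb_coord frame_coord.
rewrite sumr_mul_delta [X in _ - _ * X](_ : _ = c * \sum_k x k); last first.
  exact: sum_frame_comb_coord.
transitivity (a ^+ 2 * x j - (a * b + b * c) * \sum_k x k); first ring.
by rewrite frame_diag_sqr frame_shift_mul; field.
Qed.

Lemma dot_comb_last (x : 'I_n -> R) :
  dotv (\sum_k x k *: v k) vlast = - ((\sum_k x k) / n%:R).
Proof.
rewrite /dotv; under eq_bigr => i _ do rewrite frame_comb_coord frame_last_coord mulrC.
rewrite -mulr_sumr; transitivity (- c * (c * \sum_k x k)).
  by congr (_ * _); exact: sum_frame_comb_coord.
by rewrite mulrA mulNr -expr2 exprVn sqr_sqrtr ?ler0n // mulNr mulrC.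
Qed.

Lemma Tapply_frame d (w : 'rV[R]_n) :
  Tapply d w = \sum_j ((dotv w (v j)) ^+ d.-1 - (dotv w vlast) ^+ d.-1) *: v j.
Proof.
rewrite /Tapply big_ord_recr /= frame_last_sum scalerN scaler_sumr -sumrN -big_split /=.
by apply: eq_bigr => j _; rewrite scalerBl.
Qed.

End SimplexFrame.

Theorem mainTheorem3 (R : rcfType) (n d : nat) (hn : (2 <= n)%N) (hd : (2 <= d)%N)
  (s : 'I_n -> R)
  (hs : forall k : 'I_n, (k < n.-1)%N -> 0 <= s k <= 1)
  (hsn : forall k : 'I_n, nat_of_ord k = n.-1 ->
           s k = 1 - \sum_(j < n | (j < n.-1)%N) s j)
  (mu : R) :
  eigenpair d (\sum_(k < n) s k *: simplex_frame R n (widen_ord (leqnSn n) k)) mu <->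
  (forall k : 'I_n,
     mu * s k = (n%:R ^+ d.-1)^-1 *
                ((n.+1%:R * s k - 1) ^+ d.-1 - (-1) ^+ d.-1)).
Proof.
have n_gt0 : (0 < n)%N by apply: leq_trans hn.
have sum_s : \sum_k s k = 1.
  have last_lt : (n.-1 < n)%N by rewrite ltn_predL.
  rewrite (bigD1 (Ordinal last_lt)) //= (hsn (Ordinal last_lt) erefl).
  rewrite (eq_bigl (fun j : 'I_n => (j < n.-1)%N)) ?subrK // => j.
  by rewrite -val_eqE /=; have := ltn_ord j; lia.
set w := \sum_k _.
have Tw : Tapply d w = \sum_k ((n%:R ^+ d.-1)^-1 *
            ((n.+1%:R * s k - 1) ^+ d.-1 - (-1) ^+ d.-1)) *:
            simplex_frame R n (widen_ord (leqnSn n) k).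
  rewrite Tapply_frame //; apply: eq_bigr => k _.
  rewrite dot_comb_frame // dot_comb_last // sum_s -mulNr !expr_div_n; congr (_ *: _).
  by rewrite -mulrBl mulrC.
rewrite /eigenpair Tw scaler_sumr.
under [X in _ = X]eq_bigr => k _ do rewrite scalerA.
rewrite frame_comb_inj //; split=> [[_ eq_coef] k | eq_coef]; first by rewrite eq_coef.
split; last by move=> k; rewrite eq_coef.
apply/eqP => /frame_comb_eq0 s0; move: sum_s; rewrite big1 => [|i _]; last exact: s0.
by move/eqP; rewrite eq_sym oner_eq0.
Qed.
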